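(* Let $M$ be a loopless matroid and let $F$ be a flat of $M$. If either the restriction $M|F$ or the contraction $M/F$ has a non-standard rank-preserving rainbow circuit-free coloring, then so does $M$.
   Context: A coloring of the ground set is a partition into nonempty color classes; it is rainbow circuit-free if no circuit has all its elements of pairwise different colors, and rank-preserving if the number of colors equals the rank of the matroid. A coloring of a rank-$r$ matroid $N$ with color classes $S_1,\dots,S_r$ is standard if, after possibly reindexing the classes, $S_i$ is a cut of the restriction $N|(S_1\cup\dots\cup S_i)$ for every $i=1,\dots,r$, where a cut is an inclusionwise minimal subset of the ground set intersecting every basis. A flat is a set $F$ with $r_M(F+e)>r_M(F)$ for all $e\notin F$. *)

From mathcomp Require Import all_boot.
Set Implicit Arguments. Unset Strict Implicit. Unset Printing Implicit Defensive.

Section Matroids.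
Variable T : finType.

Record setsys := SetSys { ground : {set T}; indep : {set T} -> bool }.

Definition is_matroid (M : setsys) : Prop :=
  [/\ indep M set0,
      (forall X : {set T}, indep M X -> X \subset ground M),
      (forall X Y : {set T}, Y \subset X -> indep M X -> indep M Y) &
      (forall X Y : {set T}, indep M X -> indep M Y -> #|X| < #|Y| ->
          exists2 y, y \in Y :\: X & indep M (y |: X))].

Definition rank (M : setsys) (A : {set T}) : nat :=
  \max_(X : {set T} | (X \subset A) && indep M X) #|X|.

Definition mrank (M : setsys) : nat := rank M (ground M).

Definition is_basis (M : setsys) (B : {set T}) : bool :=
  indep M B && [forall Y : {set T}, (indep M Y && (B \subset Y)) ==> (Y == B)].

Definition is_circuit (M : setsys) (C : {set T}) : bool :=
  [&& C \subset ground M, ~~ indep M C &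
      [forall D : {set T}, (D \proper C) ==> indep M D]].

Definition meets_all_bases (M : setsys) (D : {set T}) : bool :=
  [forall B : {set T}, is_basis M B ==> (D :&: B != set0)].

Definition is_cut (M : setsys) (D : {set T}) : bool :=
  [&& D \subset ground M, meets_all_bases M D &
      [forall D' : {set T}, (D' \proper D) ==> ~~ meets_all_bases M D']].

Definition loopless (M : setsys) : Prop :=
  forall e : T, e \in ground M -> indep M [set e].

Definition is_flat (M : setsys) (F : {set T}) : Prop :=
  F \subset ground M /\
  forall e : T, e \in ground M -> e \notin F -> rank M F < rank M (e |: F).

Definition restrict (M : setsys) (S : {set T}) : setsys :=
  SetSys S (fun X => (X \subset S) && indep M X).

Definition contract (M : setsys) (S : {set T}) : setsys :=
  SetSys (ground M :\: S)
    (fun X => (X \subset ground M :\: S) && (rank M (X :|: S) == #|X| + rank M S)).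

(* a coloring: a partition of the ground set into nonempty color classes *)
Definition is_coloring (M : setsys) (P : {set {set T}}) : bool :=
  partition P (ground M).

Definition rainbow (P : {set {set T}}) (C : {set T}) : bool :=
  [forall S in P, #|C :&: S| <= 1].

Definition rainbow_circuit_free (M : setsys) (P : {set {set T}}) : Prop :=
  forall C : {set T}, is_circuit M C -> ~~ rainbow P C.

Definition rank_preserving (M : setsys) (P : {set {set T}}) : Prop :=
  #|P| = mrank M.

Definition standard (M : setsys) (P : {set {set T}}) : Prop :=
  exists s : seq {set T},
    [/\ uniq s, [set S in s] = P &
        forall i, i < size s ->
          is_cut (restrict M (\bigcup_(j < i.+1) nth set0 s j)) (nth set0 s i)].

Definition has_nonstd_rp_rcf_coloring (M : setsys) : Prop :=
  exists P : {set {set T}},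
    [/\ is_coloring M P, rainbow_circuit_free M P, rank_preserving M P
        & ~ standard M P].

End Matroids.

From mathcomp Require Import all_boot zify.
Set Implicit Arguments. Unset Strict Implicit. Unset Printing Implicit Defensive.

(* A coloring P of M|F and a coloring Q of M/F glue to the coloring P :|: Q of M. It is rank
   preserving because r(M|F) + r(M/F) = r(M), and rainbow circuit-free because a circuit of M
   inside F is a circuit of M|F, while a circuit C not inside F leaves a dependent set C :\: F
   of M/F. As F is a flat, M/F is loopless, so both minors have rank-preserving rainbow
   circuit-free colorings (by induction on the ground set: color M|H for a hyperplane H and give
   the cocircuit E :\: H one color). Finally, in a standard ordering of P :|: Q every class
   raises the rank of the union of the classes before it by exactly one; counting shows that
   the classes of P then raise r(_ :&: F), and those of Q raise r(_ :|: F), by exactly one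
   each, which are the cut conditions making the induced orderings of P and Q standard. *)

Section Rank.
Variables (T : finType) (M : setsys T).

Lemma indep_card_le_rank (A X : {set T}) : X \subset A -> indep M X -> #|X| <= rank M A.
Proof.
move=> sXA iX.
by apply: (@leq_bigmax_cond _ (fun Y : {set T} => (Y \subset A) && indep M Y)); rewrite sXA.
Qed.

Hypothesis HM : is_matroid M.

Lemma indep0 : indep M set0.
Proof. by case: HM. Qed.

Lemma indep_ground (X : {set T}) : indep M X -> X \subset ground M.
Proof. by case: HM => _ sub _ _; apply: sub. Qed.

Lemma indepS (X Y : {set T}) : Y \subset X -> indep M X -> indep M Y.
Proof. by case: HM => _ _ sub _; apply: sub. Qed.

Lemma rank_witness (A : {set T}) :
  exists2 X : {set T}, (X \subset A) && indep M X & #|X| = rank M A.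
Proof.
have [|X AX eX] := eq_bigmax_cond (fun X : {set T} => #|X|)
  (A := [pred X : {set T} | (X \subset A) && indep M X]).
  by apply/card_gt0P; exists set0; rewrite inE sub0set indep0.
by exists X; rewrite // -eX; apply: eq_bigl.
Qed.

Lemma rank_mono (A B : {set T}) : A \subset B -> rank M A <= rank M B.
Proof.
move=> sAB; have [X /andP[sXA iX] <-] := rank_witness A.
exact: indep_card_le_rank (subset_trans sXA sAB) iX.
Qed.

Lemma rank_le_card (A : {set T}) : rank M A <= #|A|.
Proof. by have [X /andP[sXA _] <-] := rank_witness A; apply: subset_leq_card. Qed.

Lemma rank_set0 : rank M set0 = 0.
Proof. by apply/eqP; rewrite -leqn0 -(cards0 T) rank_le_card. Qed.

Lemma rank_indep (X : {set T}) : indep M X -> rank M X = #|X|.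
Proof. by move=> iX; apply/eqP; rewrite eqn_leq rank_le_card indep_card_le_rank. Qed.

Lemma rank_lt_card (X : {set T}) : ~~ indep M X -> rank M X < #|X|.
Proof.
apply: contraR; rewrite -leqNgt => leXr.
have [Y /andP[sYX iY] eY] := rank_witness X.
suff -> : X = Y by [].
by apply/eqP; rewrite eq_sym eqEcard sYX eY.
Qed.

Lemma rank_extend (J A : {set T}) : indep M J -> J \subset A ->
  exists I : {set T}, [/\ J \subset I, I \subset A, indep M I & #|I| = rank M A].
Proof.
move Hk: (rank M A - #|J|) => k; elim: k J Hk => [|k IH] J Hk iJ sJA.
  by exists J; split=> //; apply/eqP; rewrite eqn_leq indep_card_le_rank // -subn_eq0 Hk.
have [X /andP[sXA iX] eX] := rank_witness A.
case: HM => _ _ _ augment.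
have [|y /setDP[yX yJ] iyJ] := augment J X iJ iX; first by lia.
have [|||I [sI sIA iI eI]] := IH (y |: J).
- by rewrite cardsU1 yJ; lia.
- exact: iyJ.
- by rewrite subUset sub1set (subsetP sXA).
by exists I; split=> //; apply: subset_trans sI; apply: subsetUr.
Qed.

Lemma rank_submod (A B : {set T}) :
  rank M (A :|: B) + rank M (A :&: B) <= rank M A + rank M B.
Proof.
have [I /andP[sI iI] eI] := rank_witness (A :&: B).
have [J [sIJ sJ iJ <-]] :=
  rank_extend iI (subset_trans sI (subset_trans (subsetIl A B) (subsetUl A B))).
have iJ_ D : indep M (J :&: D) := indepS (subsetIl J D) iJ.
have rA : #|J :&: A| <= rank M A := indep_card_le_rank (subsetIr _ _) (iJ_ A).
have rB : #|J :&: B| <= rank M B := indep_card_le_rank (subsetIr _ _) (iJ_ B).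
have eJ : (J :&: A) :|: (J :&: B) = J by rewrite -setIUr; apply/setIidPl.
have sII : #|I| <= #|(J :&: A) :&: (J :&: B)|.
  by apply: subset_leq_card; rewrite setIACA setIid subsetI sIJ.
by have := cardsUI (J :&: A) (J :&: B); rewrite eJ -eI; lia.
Qed.

Lemma rank_diminishing (A B X : {set T}) : A \subset B ->
  rank M (B :|: X) + rank M A <= rank M B + rank M (A :|: X).
Proof.
move=> sAB; have := rank_submod B (A :|: X).
rewrite setUA (setUidPl sAB).
have : rank M A <= rank M (B :&: (A :|: X)) by apply: rank_mono; rewrite subsetI sAB subsetUl.
lia.
Qed.

Lemma rankU_le (A B : {set T}) : rank M (A :|: B) <= rank M A + #|B|.
Proof. by have := rank_submod A B; have := rank_le_card B; lia. Qed.

Lemma rankU1_le (A : {set T}) (x : T) : rank M (x |: A) <= (rank M A).+1.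
Proof. by rewrite setUC -addn1 -(cards1 x) rankU_le. Qed.

Lemma span_mono (A B : {set T}) (x : T) : A \subset B ->
  rank M (x |: A) <= rank M A -> rank M (x |: B) <= rank M B.
Proof.
by move=> sAB; have := rank_diminishing [set x] sAB; rewrite ![_ :|: [set x]]setUC; lia.
Qed.

Lemma span_setU (A Z : {set T}) :
  (forall y, y \in Z -> rank M (y |: A) <= rank M A) -> rank M (A :|: Z) <= rank M A.
Proof.
rewrite -(set_enum Z); elim: (enum Z) => [|y s IH] span_s; first by rewrite set_nil setU0.
rewrite set_cons setUCA.
have {}IH : rank M (A :|: [set:: s]) <= rank M A.
  by apply: IH => z zs; apply: span_s; rewrite set_cons in_setU zs orbT.
apply: leq_trans IH; apply: span_mono (subsetUl _ _) _.
by apply: span_s; rewrite set_cons setU11.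
Qed.

End Rank.

Section Cuts.
Variables (T : finType) (N : setsys T).
Hypothesis HN : is_matroid N.

Lemma basisP (B : {set T}) : reflect (indep N B /\ mrank N <= #|B|) (is_basis N B).
Proof.
apply: (iffP andP) => [[iB /forallP maxB] | [iB leB]]; split=> //.
  have [I [sBI _ iI eI]] := rank_extend HN iB (indep_ground HN iB).
  by have /implyP/(_ _)/eqP <- := maxB I; rewrite ?iI ?sBI // eI.
apply/forallP => Y; apply/implyP => /andP[iY sBY].
have := indep_card_le_rank (indep_ground HN iY) iY.
rewrite eq_sym eqEcard sBY -/(mrank N) /=; lia.
Qed.

Lemma meets_all_basesP (D : {set T}) :
  meets_all_bases N D = (rank N (ground N :\: D) < mrank N).
Proof.
apply/forallP/idP => [meets | lt B].
  rewrite ltnNge; apply/negP => le.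
  have [I /andP[sI iI] eI] := rank_witness HN (ground N :\: D).
  have /implyP/(_ _)/set0Pn[|x /setIP[xD xI]] := meets I.
    by apply/basisP; rewrite eI.
  by have /setDP[_ /negP] := subsetP sI x xI.
apply/implyP => /basisP[iB leB]; apply: contraTneq lt => DB0.
rewrite -leqNgt; apply: leq_trans leB (indep_card_le_rank _ iB).
rewrite subsetD indep_ground //= disjoint_sym -setI_eq0.
by apply/eqP.
Qed.

Lemma cutP (D : {set T}) :
  is_cut N D <->
  [/\ D \subset ground N, rank N (ground N :\: D) < mrank N &
      {in D, forall x, mrank N <= rank N (x |: (ground N :\: D))}].
Proof.
rewrite /is_cut meets_all_basesP; split.
  case/and3P=> sD lt /forallP minD; split=> // x xD.
  have := implyP (minD (D :\ x)) (properD1 xD); rewrite meets_all_basesP -leqNgt.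
  move/leq_trans; apply; apply: (rank_mono HN).
  by apply/subsetP => y; rewrite !inE; case: (y == x).
case=> sD lt minD; rewrite sD lt; apply/forallP => D'.
apply/implyP => /properP[sD'D [x xD xD']]; rewrite meets_all_basesP -leqNgt.
apply: leq_trans (minD x xD) (rank_mono HN _).
rewrite subUset sub1set !inE xD' (subsetP sD) //=.
by apply: setDS.
Qed.

End Cuts.

Section Restriction.
Variables (T : finType) (N : setsys T).
Hypothesis HN : is_matroid N.

Lemma restrict_matroid (G : {set T}) : is_matroid (restrict N G).
Proof.
case: HN => i0 _ indS augment; split=> /=.
- by rewrite sub0set i0.
- by move=> X /andP[].
- move=> X Y sYX /andP[sXG iX].
  by rewrite (subset_trans sYX sXG) (indS X Y).
- move=> X Y /andP[sXG iX] /andP[sYG iY] ltXY.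
  have [y yYX iyX] := augment X Y iX iY ltXY; exists y => //.
  by rewrite iyX subUset sXG sub1set (subsetP sYG) //; case/setDP: yYX.
Qed.

Lemma rank_restrict (G A : {set T}) : rank (restrict N G) A = rank N (A :&: G).
Proof. by apply: eq_bigl => X /=; rewrite subsetI andbA. Qed.

Lemma mrank_restrict (G : {set T}) : mrank (restrict N G) = rank N G.
Proof. by rewrite /mrank rank_restrict setIid. Qed.

Lemma loopless_restrict (G : {set T}) :
  loopless N -> G \subset ground N -> loopless (restrict N G).
Proof. by move=> lN sG e /= eG; rewrite sub1set eG lN // (subsetP sG). Qed.

Lemma circuit_restrict (G C : {set T}) :
  is_circuit N C -> C \subset G -> is_circuit (restrict N G) C.
Proof.
case/and3P=> _ dC /forall_inP minC sCG; rewrite /is_circuit /= sCG dC.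
by apply/forall_inP => D pD; rewrite (subset_trans (proper_sub pD) sCG) minC.
Qed.

Lemma cut_restrictP (H S : {set T}) : [disjoint H & S] ->
  is_cut (restrict N (H :|: S)) S <->
  rank N (H :|: S) = (rank N H).+1 /\ {in S, forall x, rank N H < rank N (x |: H)}.
Proof.
move=> dHS; have eH : (H :|: S) :\: S = H by rewrite setDUl setDv setU0; apply/setDidPl.
have rU1 x : x \in S -> rank (restrict N (H :|: S)) (x |: H) = rank N (x |: H).
  by move=> xS; rewrite rank_restrict; congr rank; apply/setIidPl; rewrite setUC setUS ?sub1set.
rewrite (cutP (restrict_matroid _)) mrank_restrict /= eH rank_restrict.
rewrite (setIidPl (subsetUl _ _)) subsetUr; split.
- case=> _ ltH spanS; have /set0Pn[x xS] : S != set0.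
    by apply: contraTneq ltH => ->; rewrite setU0 ltnn.
  have := rankU1_le HN H x; have := spanS x xS; rewrite rU1 //.
  split=> [|y yS]; first lia.
  by have := spanS y yS; rewrite rU1 //; lia.
- by case=> eHS ltS; rewrite eHS; split=> // x xS; rewrite rU1 // ltS.
Qed.

End Restriction.

Section Contraction.
Variables (T : finType) (N : setsys T) (F : {set T}).
Hypothesis HN : is_matroid N.

Lemma contract_matroid : is_matroid (contract N F).
Proof.
split; rewrite /contract /=.
- by rewrite sub0set set0U cards0 add0n eqxx.
- by move=> X /andP[].
- move=> X Y sYX /andP[sX /eqP eX]; rewrite (subset_trans sYX sX) /=.
  have eXY : X :|: F = (Y :|: F) :|: (X :\: Y).
    apply/setP => z; rewrite !inE; case: (boolP (z \in Y)) => [/(subsetP sYX) -> //|_].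
    by case: (z \in X); case: (z \in F).
  have := rankU_le HN (Y :|: F) (X :\: Y); rewrite -eXY eX.
  have := rankU_le HN F Y; rewrite setUC.
  have := cardsD X Y; rewrite (setIidPr sYX).
  by have := subset_leq_card sYX; move=> *; apply/eqP; lia.
- move=> X Y /andP[sX /eqP eX] /andP[sY /eqP eY] ltXY.
  have [/exists_inP[y yYX iyX] | /exists_inP noaug] :=
    boolP [exists y in Y :\: X, indep (contract N F) (y |: X)]; first by exists y.
  have spanY y : y \in Y :\: X -> rank N (y |: (X :|: F)) <= rank N (X :|: F).
    move=> yYX; have /setDP[yY yX] := yYX.
    have : ~~ indep (contract N F) (y |: X) by apply/negP => iyX; apply: noaug; exists y.
    rewrite /contract /= subUset sub1set (subsetP sY) // sX /= cardsU1 yX add1n -setUA.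
    by have := rankU1_le HN (X :|: F) y; rewrite eX; lia.
  have := span_setU HN spanY; rewrite eX.
  have : rank N (Y :|: F) <= rank N (X :|: F :|: Y :\: X).
    apply: (rank_mono HN); apply/subsetP => z; rewrite !inE.
    by case: (z \in X); case: (z \in Y); case: (z \in F).
  lia.
Qed.

Lemma rank_contract (A : {set T}) : A \subset ground N :\: F ->
  rank (contract N F) A = rank N (A :|: F) - rank N F.
Proof.
move=> sA; apply/eqP; rewrite eqn_leq; apply/andP; split.
  have [X /andP[sXA /andP[_ /eqP eX]] <-] := rank_witness contract_matroid A.
  have : rank N (X :|: F) <= rank N (A :|: F) by apply: (rank_mono HN); apply: setSU.
  lia.
have [I /andP[sIF iI] eI] := rank_witness HN F.
have [J [sIJ sJ iJ eJ]] := rank_extend HN iI (subset_trans sIF (subsetUr A F)).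
have JF_le : #|J :&: F| <= rank N F.
  exact: indep_card_le_rank (subsetIr _ _) (indepS HN (subsetIl _ _) iJ).
have I_le : #|I| <= #|J :&: F| by apply: subset_leq_card; rewrite subsetI sIJ.
have sJFA : J :\: F \subset A.
  by apply/subsetP => z /setDP[zJ zF]; move: (subsetP sJ z zJ); rewrite inE (negbTE zF) orbF.
have J_le : #|J| <= rank N ((J :\: F) :|: F).
  by apply: indep_card_le_rank iJ; apply/subsetP => z zJ; rewrite !inE zJ; case: (z \in F).
have JF_ge := rankU_le HN F (J :\: F); rewrite setUC in JF_ge.
have eJF := cardsD J F.
have : #|J :\: F| <= rank (contract N F) A.
  apply: (indep_card_le_rank sJFA); rewrite /contract /= (subset_trans sJFA sA) /=.
  by apply/eqP; have := subset_leq_card (subsetIl J F); lia.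
lia.
Qed.

Lemma mrank_contract : F \subset ground N -> mrank (contract N F) = mrank N - rank N F.
Proof. by move=> sF; rewrite /mrank rank_contract //= setUC -{1}(setIidPr sF) setID. Qed.

Lemma loopless_contract : is_flat N F -> loopless (contract N F).
Proof.
move=> [_ flatF] e /= /setDP[eE eF].
rewrite sub1set !inE eE eF cards1 /=.
by have := flatF e eE eF; have := rankU1_le HN F e; lia.
Qed.

Lemma contract_dep_of_circuit (C : {set T}) :
  is_circuit N C -> ~~ (C \subset F) -> ~~ indep (contract N F) (C :\: F).
Proof.
case/and3P=> _ dC /forall_inP minC nsCF; apply/negP => /andP[_ /eqP eCF].
have iCF : indep N (C :&: F).
  apply: minC; rewrite properEneq subsetIl andbT.
  by apply: contra nsCF => /eqP <-; apply: subsetIr.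
have [I [sCI sIF iI eI]] := rank_extend HN iCF (subsetIr C F).
have sC : C \subset (C :\: F) :|: I.
  apply/subsetP => z zC; rewrite !inE zC andbT.
  by case zF: (z \in F) => //=; apply: (subsetP sCI); rewrite inE zC zF.
have ltCI : rank N ((C :\: F) :|: I) < #|(C :\: F) :|: I|.
  by apply: rank_lt_card => //; apply: contra dC => iCI; exact: (indepS HN sC iCI).
have cardCI := cardsU (C :\: F) I.
have := rank_diminishing HN (C :\: F) sIF.
rewrite (rank_indep HN iI) eI ![_ :|: (C :\: F)]setUC eCF.
lia.
Qed.

End Contraction.

Lemma circuit_of_dep (T : finType) (N : setsys T) (X : {set T}) :
  X \subset ground N -> ~~ indep N X -> exists2 C : {set T}, C \subset X & is_circuit N C.
Proof.
move=> sX dX.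
have [C /minsetP[/andP[sC dC] minC] sCX] :=
  minset_exists (P := fun Y => (Y \subset ground N) && ~~ indep N Y) (introT andP (conj sX dX)).
exists C; rewrite // /is_circuit sC dC; apply/forall_inP => D pD.
apply: contraT => dD; have sDC := proper_sub pD.
have eDC : D = C by apply: (minC _ _ sDC); rewrite (subset_trans sDC sC) dD.
by rewrite eDC properxx in pD.
Qed.

Lemma circuit_card_gt1 (T : finType) (N : setsys T) (C : {set T}) :
  is_matroid N -> loopless N -> is_circuit N C -> 1 < #|C|.
Proof.
move=> HN lN /and3P[sC dC _]; rewrite ltnNge; apply: contra dC.
rewrite leq_eqVlt ltnS leqn0 cards_eq0 => /orP[/cards1P[x eC] | /eqP ->].
- by rewrite eC in sC *; apply: lN; rewrite -sub1set.
- exact: indep0.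
Qed.

Lemma exists_hyperplane (T : finType) (N : setsys T) : is_matroid N -> 0 < mrank N ->
  exists H : {set T}, [/\ is_flat N H, H \proper ground N & (rank N H).+1 = mrank N].
Proof.
move=> HN rpos; have [B /andP[sB iB] eB] := rank_witness HN (ground N).
have /card_gt0P[b bB] : 0 < #|B| by rewrite eB.
pose B' := B :\ b.
have rB' : (rank N B').+1 = mrank N.
  by rewrite (rank_indep HN (indepS HN (subD1set B b) iB)) /mrank -eB (cardsD1 b B) bB.
pose H := [set e in ground N | rank N (e |: B') <= rank N B'].
have memH e : (e \in H) = (e \in ground N) && (rank N (e |: B') <= rank N B') by rewrite inE.
have sB'H : B' \subset H.
  apply/subsetP => e eB'; rewrite memH (subsetP sB) ?(subsetP (subD1set B b)) //=.
  by rewrite (setUidPr _) // sub1set.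
have rH : rank N H = rank N B'.
  apply/eqP; rewrite eqn_leq (rank_mono HN sB'H) andbT.
  apply: leq_trans (rank_mono HN (subsetUr B' H)) (span_setU HN _).
  by move=> e; rewrite memH => /andP[].
have sHE : H \subset ground N by apply/subsetP => e; rewrite memH => /andP[].
exists H; split; last by rewrite rH.
- split=> // e eE; rewrite memH eE /= -ltnNge rH => ltB'.
  exact: leq_trans ltB' (rank_mono HN (setUS _ sB'H)).
- rewrite properE sHE; apply/subsetPn; exists b; first exact: subsetP sB b bB.
  rewrite memH negb_and -ltnNge setD1K // (rank_indep HN iB) eB -/(mrank N) -rB'.
  by rewrite ltnSn orbT.
Qed.

Section Partitions.
Variable T : finType.
Implicit Types (P Q : {set {set T}}) (A B C : {set T}).

Lemma setDKU A B : (A :\: B) :|: B = A :|: B.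
Proof. by apply/setP => x; rewrite !inE; case: (x \in B); rewrite ?orbT ?orbF ?andbT. Qed.

Lemma partition_setU P Q A B : partition P A -> partition Q B -> [disjoint A & B] ->
  partition (P :|: Q) (A :|: B).
Proof.
move=> /and3P[/eqP coverP trivP P0] /and3P[/eqP coverQ trivQ Q0] dAB.
apply/and3P; split.
- by rewrite /cover bigcup_setU -/(cover P) -/(cover Q) coverP coverQ.
- by apply: trivIsetU => //; rewrite coverP coverQ.
- by rewrite inE negb_or P0 Q0.
Qed.

Lemma card_partition_setU P Q A B : partition P A -> partition Q B -> [disjoint A & B] ->
  #|P :|: Q| = #|P| + #|Q|.
Proof.
move=> cP cQ dAB; rewrite cardsU; suff -> : P :&: Q = set0 by rewrite cards0 subn0.
apply/setP => S; rewrite !inE; apply/negP => /andP[SP SQ].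
have /set0Pn[x xS] := partition_neq0 cP SP.
by have := disjointFr dAB (subsetP (partitionS cP SP) x xS); rewrite (subsetP (partitionS cQ SQ)).
Qed.

Lemma rainbow_setS P C C' : C' \subset C -> rainbow P C -> rainbow P C'.
Proof.
move=> sC /forall_inP rC; apply/forall_inP => S SP.
exact: leq_trans (subset_leq_card (setSI S sC)) (rC S SP).
Qed.

Lemma rainbow_classesS P Q C : Q \subset P -> rainbow P C -> rainbow Q C.
Proof. by move=> sQP /forall_inP rC; apply/forall_inP => S /(subsetP sQP); apply: rC. Qed.

End Partitions.

Section ColoringUnion.
Variables (T : finType) (M : setsys T) (F : {set T}) (P Q : {set {set T}}).
Hypotheses (HM : is_matroid M) (sF : F \subset ground M).
Hypotheses (cP : is_coloring (restrict M F) P) (cQ : is_coloring (contract M F) Q).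

Let dF : [disjoint F & ground M :\: F].
Proof. by rewrite disjoint_sym disjoints_subset; apply/subsetP => x; rewrite !inE => /andP[]. Qed.

Let eE : F :|: (ground M :\: F) = ground M.
Proof. by rewrite -{1}(setIidPr sF) setID. Qed.

Lemma coloring_setU : is_coloring M (P :|: Q).
Proof. by rewrite /is_coloring -eE; apply: partition_setU. Qed.

Lemma card_coloring_setU : #|P :|: Q| = #|P| + #|Q|.
Proof. exact: card_partition_setU cP cQ dF. Qed.

Lemma rank_preserving_setU :
  rank_preserving (restrict M F) P -> rank_preserving (contract M F) Q ->
  rank_preserving M (P :|: Q).
Proof.
rewrite /rank_preserving card_coloring_setU mrank_restrict mrank_contract // => -> ->.
by have := rank_mono HM sF; rewrite -/(mrank M); lia.
Qed.

Lemma rainbow_circuit_free_setU :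
  rainbow_circuit_free (restrict M F) P -> rainbow_circuit_free (contract M F) Q ->
  rainbow_circuit_free M (P :|: Q).
Proof.
move=> rcfP rcfQ C cC; have [sCF | nsCF] := boolP (C \subset F).
  by apply: contra (rcfP C (circuit_restrict cC sCF)); apply: rainbow_classesS; apply: subsetUl.
have sCE : C :\: F \subset ground (contract M F) by apply: setSD; case/and3P: cC.
have [C' sC'C cC'] := circuit_of_dep sCE (contract_dep_of_circuit HM cC nsCF).
apply: contra (rcfQ C' cC') => rC; apply: rainbow_setS (subset_trans sC'C (subsetDl C F)) _.
by apply: rainbow_classesS rC; apply: subsetUr.
Qed.

End ColoringUnion.

Lemma rp_rcf_coloring_setU (T : finType) (M : setsys T) (F : {set T}) (P Q : {set {set T}}) :
  is_matroid M -> F \subset ground M ->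
  [/\ is_coloring (restrict M F) P, rainbow_circuit_free (restrict M F) P
     & rank_preserving (restrict M F) P] ->
  [/\ is_coloring (contract M F) Q, rainbow_circuit_free (contract M F) Q
     & rank_preserving (contract M F) Q] ->
  [/\ is_coloring M (P :|: Q), rainbow_circuit_free M (P :|: Q)
     & rank_preserving M (P :|: Q)].
Proof.
move=> HM sF [cP rcfP rpP] [cQ rcfQ rpQ]; split.
- exact: coloring_setU sF cP cQ.
- exact: rainbow_circuit_free_setU HM rcfP rcfQ.
- exact: rank_preserving_setU HM sF cP cQ rpP rpQ.
Qed.

Lemma partition_set1 (T : finType) (A : {set T}) : A != set0 -> partition [set A] A.
Proof. by move=> A0; rewrite /partition cover1 eqxx trivIset1 inE eq_sym A0. Qed.

Lemma rp_rcf_coloring_exists (T : finType) (N : setsys T) : is_matroid N -> loopless N ->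
  exists P, [/\ is_coloring N P, rainbow_circuit_free N P & rank_preserving N P].
Proof.
move Hn : #|ground N| => n; elim/ltn_ind: n N Hn => n IH N Hn HN lN.
have [r0 | rpos] := posnP (mrank N).
  have E0 : ground N = set0.
    apply/setP => e; rewrite in_set0; apply/negP => eE.
    have : #|[set e]| <= mrank N by apply: indep_card_le_rank (lN e eE); rewrite sub1set.
    by rewrite cards1 r0.
  exists set0; split.
  - by rewrite /is_coloring E0 partition_set0.
  - by move=> C /and3P[]; rewrite E0 subset0 => /eqP ->; rewrite indep0.
  - by rewrite /rank_preserving cards0 r0.
have [H [flatH ltHE rH]] := exists_hyperplane HN rpos.
have sHE := proper_sub ltHE.
have [|P [cP rcfP rpP]] :=
  IH #|H| _ (restrict N H) erefl (restrict_matroid HN H) (loopless_restrict lN sHE).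
  by rewrite -Hn proper_card.
pose Q := [set ground N :\: H].
have cQ : is_coloring (contract N H) Q.
  by apply: partition_set1; move: ltHE; rewrite properE setD_eq0 => /andP[].
have rcfQ : rainbow_circuit_free (contract N H) Q.
  move=> C cC; apply/forall_inP => /(_ _ (set11 _)).
  case/and3P: (cC) => /setIidPl -> _ _; rewrite leqNgt.
  by rewrite (circuit_card_gt1 (contract_matroid H HN) (loopless_contract HN flatH) cC).
have rpQ : rank_preserving (contract N H) Q.
  by rewrite /rank_preserving cards1 mrank_contract // -rH subSnn.
by exists (P :|: Q); apply: rp_rcf_coloring_setU HN sHE (And3 cP rcfP rpP) (And3 cQ rcfQ rpQ).
Qed.

Lemma leq_sum_tight n (a b : nat -> nat) :
  (forall i, i < n -> a i <= b i) -> \sum_(0 <= i < n) b i <= \sum_(0 <= i < n) a i ->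
  forall i, i < n -> a i = b i.
Proof.
elim: n => [|n IH] le_ab //.
have le_ab' j : j < n -> a j <= b j by move=> lt_jn; apply: le_ab; rewrite ltnS ltnW.
have le_sum : \sum_(0 <= j < n) a j <= \sum_(0 <= j < n) b j.
  by rewrite !big_mkord; apply: leq_sum => j _; apply: le_ab'.
have le_n := le_ab n (ltnSn n).
rewrite !big_nat_recr //= => ge_sum i; rewrite ltnS leq_eqVlt => /orP[/eqP -> | lt_in].
  lia.
by apply: IH lt_in => //; lia.
Qed.

Section PrefixUnion.
Variable T : finType.
Implicit Types (s : seq {set T}) (S D : {set T}).

Definition prefix_union s i : {set T} := \bigcup_(X <- take i s) X.

Lemma prefix_union0 s : prefix_union s 0 = set0.
Proof. by rewrite /prefix_union take0 big_nil. Qed.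

Lemma bigcup_nth_prefix s i : \bigcup_(j < i) nth set0 s j = prefix_union s i.
Proof.
elim: i => [|i IH]; first by rewrite big_ord0 prefix_union0.
rewrite big_ord_recr /= IH /prefix_union; have [lt_is | le_si] := ltnP i (size s).
  by rewrite (take_nth set0 lt_is) big_rcons.
by rewrite nth_default // !take_oversize ?setU0 // leqW.
Qed.

Lemma prefix_unionS s i : i < size s ->
  prefix_union s i.+1 = prefix_union s i :|: nth set0 s i.
Proof. by move=> lt_is; rewrite /prefix_union (take_nth set0 lt_is) big_rcons. Qed.

Lemma prefix_union_size s : prefix_union s (size s) = \bigcup_(X <- s) X.
Proof. by rewrite /prefix_union take_size. Qed.

Lemma take_index_filter (p : pred {set T}) s S : p S ->
  take (index S (filter p s)) (filter p s) = filter p (take (index S s) s).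
Proof.
move=> pS; elim: s => [|X s IH] //=.
have [-> | neXS] := eqVneq X S; first by rewrite pS /= eqxx.
by rewrite /=; case: (p X) => /=; rewrite ?(negbTE neXS) /= IH.
Qed.

Lemma bigcup_seq_setI (p : pred {set T}) (r : seq {set T}) D :
  (forall X, X \in r -> if p X then X \subset D else [disjoint X & D]) ->
  \bigcup_(X <- r | p X) X = (\bigcup_(X <- r) X) :&: D.
Proof.
elim: r => [|X r IH] splitD; first by rewrite !big_nil set0I.
rewrite !big_cons setIUl -IH => [|Y Yr]; last by apply: splitD; rewrite inE Yr orbT.
have := splitD X (mem_head _ _); case: (p X) => [/setIidPl -> // | /disjoint_setI0 ->].
by rewrite set0U.
Qed.

Lemma standard_of_prefix_cuts (N : setsys T) (P : {set {set T}}) s :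
  uniq s -> [set S in s] = P ->
  {in s, forall S, is_cut (restrict N (prefix_union s (index S s) :|: S)) S} ->
  standard N P.
Proof.
move=> us sP cuts; exists s; split=> // i lt_is.
rewrite bigcup_nth_prefix prefix_unionS // -{1}(index_uniq set0 lt_is us).
exact/cuts/mem_nth.
Qed.

End PrefixUnion.

Section StandardUnion.
Variables (T : finType) (M : setsys T) (F : {set T}) (P Q : {set {set T}}).
Hypotheses (HM : is_matroid M) (sF : F \subset ground M).
Hypotheses (cP : is_coloring (restrict M F) P) (cQ : is_coloring (contract M F) Q).
Variable s : seq {set T}.
Hypotheses (us : uniq s) (sPQ : [set S in s] = P :|: Q).
Hypothesis cuts : forall i, i < size s ->
  is_cut (restrict M (\bigcup_(j < i.+1) nth set0 s j)) (nth set0 s i).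

Local Notation pre := (prefix_union s).

Let cPQ : partition (P :|: Q) (ground M) := coloring_setU sF cP cQ.

Let block_subF X : X \in P -> X \subset F.
Proof. exact: partitionS cP. Qed.

Let block_disjF X : X \in Q -> [disjoint X & F].
Proof.
move/(partitionS cQ) => sX; rewrite disjoint_subset.
by apply: subset_trans sX _; apply/subsetP => x /setDP[].
Qed.

Lemma mem_colors X : X \in s -> X \in P :|: Q.
Proof. by rewrite -sPQ inE. Qed.

Lemma prefix_union_disjoint i : i < size s -> [disjoint pre i & nth set0 s i].
Proof.
move=> lt_is; rewrite disjoint_sym /prefix_union bigcup_seq.
apply/bigcup_disjointP => X Xi; have sis := mem_nth set0 lt_is.
apply: (trivIsetP (partition_trivIset cPQ)); rewrite ?mem_colors ?(mem_take Xi) //.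
by apply: contraTneq Xi => <-; rewrite in_take // index_uniq // ltnn.
Qed.

Lemma prefix_union_sub i : pre i \subset ground M.
Proof.
rewrite /prefix_union bigcup_seq; apply/bigcupsP => X Xi.
exact/(partitionS cPQ)/mem_colors/(mem_take Xi).
Qed.

Lemma prefix_union_step i : i < size s ->
  rank M (pre i.+1) = (rank M (pre i)).+1 /\
  {in nth set0 s i, forall x, rank M (x |: pre i) = (rank M (pre i)).+1}.
Proof.
move=> lt_is; have := cuts lt_is; rewrite bigcup_nth_prefix prefix_unionS //.
case/(cut_restrictP HM (prefix_union_disjoint lt_is)) => -> ltS; split=> // x xS.
by apply/eqP; rewrite eqn_leq rankU1_le // ltS.
Qed.

Lemma prefix_union_all : pre (size s) = ground M.
Proof.
rewrite prefix_union_size bigcup_seq -(cover_partition cPQ) /cover.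
by apply: eq_bigl => X; rewrite -sPQ inE.
Qed.

Lemma sum_mem_colors (R : {set {set T}}) : R \subset P :|: Q ->
  \sum_(0 <= i < size s) (nth set0 s i \in R) = #|R|.
Proof.
move=> sR; rewrite -(big_nth set0 xpredT (fun X => nat_of_bool (X \in R))).
rewrite -big_mkcond sum1_count -size_filter -(card_uniqP (filter_uniq _ us)).
apply: eq_card => X; rewrite mem_filter /=.
by case: (boolP (X \in R)) => //= /(subsetP sR); rewrite -sPQ inE.
Qed.

Lemma prefix_span_setI i x (D : {set T}) : i < size s -> x \in nth set0 s i ->
  rank M (pre i :&: D) < rank M (x |: (pre i :&: D)).
Proof.
move=> lt_is xS; have [_ spanS] := prefix_union_step lt_is.
rewrite ltnNge; apply/negP => /(span_mono HM (subsetIl _ D)).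
by rewrite spanS // ltnn.
Qed.

Lemma prefix_step_setU i x (D : {set T}) : i < size s -> x \in nth set0 s i ->
  rank M (pre i.+1 :|: D) <= rank M (x |: (pre i :|: D)).
Proof.
move=> lt_is xS; have [stepS spanS] := prefix_union_step lt_is.
have eS : x |: pre i :|: nth set0 s i = pre i.+1.
  have xSi : [set x] \subset nth set0 s i by rewrite sub1set.
  by rewrite -setUA setUCA (setUidPr xSi) prefix_unionS.
have := rank_diminishing HM (nth set0 s i) (subsetUl (x |: pre i) D).
rewrite setUAC eS spanS // -stepS setUA; lia.
Qed.

(* Each class of P raises r(_ :&: F) by at least one, and there are only #|P| = r(F) of them. *)
Lemma restrict_prefix_step i : rank_preserving (restrict M F) P ->
  i < size s -> nth set0 s i \in P ->
  rank M (pre i.+1 :&: F) = (rank M (pre i :&: F)).+1.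
Proof.
rewrite /rank_preserving mrank_restrict => rpP.
pose f j := rank M (pre j :&: F).
have f_mono j : j < size s -> f j <= f j.+1.
  by move=> lt_js; apply: (rank_mono HM); rewrite prefix_unionS // setSI // subsetUl.
have f_incr j : j < size s -> nth set0 s j \in P -> f j < f j.+1.
  move=> lt_js SP; have /set0Pn[x xS] := partition_neq0 cP SP.
  apply: leq_trans (prefix_span_setI F lt_js xS) (rank_mono HM _).
  have xF := subsetP (block_subF SP) x xS.
  by rewrite prefix_unionS // setIUl subUset subsetUl sub1set !inE xS xF orbT.
have := leq_sum_tight (n := size s) (a := fun j => nat_of_bool (nth set0 s j \in P))
  (b := fun j => f j.+1 - f j).
rewrite sum_mem_colors ?subsetUl // telescope_sumn_in // => tight lt_is SP.
suff : nat_of_bool (nth set0 s i \in P) = f i.+1 - f i.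
  by rewrite SP /f; have := f_mono i lt_is; rewrite /f; lia.
apply: tight lt_is => [j lt_js|].
- by case: (boolP (nth set0 s j \in P)) => [/(f_incr j lt_js) | _]; lia.
- by rewrite rpP /f prefix_union_all prefix_union0 set0I (rank_set0 HM) (setIidPr sF) subn0.
Qed.

(* Each class raises r(_ :|: F) by at most one, and by zero if it lies in F; the increments
   add up to r(M) - r(F) = #|Q|. *)
Lemma contract_prefix_step i : rank_preserving (contract M F) Q ->
  i < size s -> nth set0 s i \in Q ->
  rank M (pre i.+1 :|: F) = (rank M (pre i :|: F)).+1.
Proof.
rewrite /rank_preserving mrank_contract // => rpQ.
pose g j := rank M (pre j :|: F).
have g_mono j : j < size s -> g j <= g j.+1.
  by move=> lt_js; apply: (rank_mono HM); rewrite prefix_unionS // setUAC subsetUl.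
have g_step j : j < size s -> g j.+1 - g j <= (nth set0 s j \in Q).
  move=> lt_js; have [SP | nSP] := boolP (nth set0 s j \in P).
    by rewrite /g prefix_unionS // -setUA (setUidPr (block_subF SP)) subnn.
  have SQ : nth set0 s j \in Q.
    by have := mem_colors (mem_nth set0 lt_js); rewrite inE (negbTE nSP).
  have /set0Pn[x xS] := partition_neq0 cQ SQ.
  have := prefix_step_setU F lt_js xS; have := rankU1_le HM (pre j :|: F) x.
  by rewrite SQ /g; lia.
have := leq_sum_tight (n := size s) (a := fun j => g j.+1 - g j)
  (b := fun j => nat_of_bool (nth set0 s j \in Q)).
rewrite sum_mem_colors ?subsetUr // telescope_sumn_in // => tight lt_is SQ.
suff : g i.+1 - g i = nat_of_bool (nth set0 s i \in Q).
  by rewrite SQ /g; have := g_mono i lt_is; rewrite /g; lia.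
apply: tight lt_is => //.
by rewrite rpQ /g prefix_union_all prefix_union0 set0U (setUidPl sF).
Qed.

Lemma prefix_union_filter (R : {set {set T}}) (D : {set T}) S :
  {in P :|: Q, forall X, if X \in R then X \subset D else [disjoint X & D]} -> S \in R ->
  prefix_union (filter (mem R) s) (index S (filter (mem R) s)) = pre (index S s) :&: D.
Proof.
move=> splitD SR; rewrite /prefix_union take_index_filter // big_filter.
by apply: bigcup_seq_setI => X Xi; apply/splitD/mem_colors/(mem_take Xi).
Qed.

Lemma filter_colors (R : {set {set T}}) : R \subset P :|: Q ->
  [set S in filter (mem R) s] = R.
Proof.
move=> sR; apply/setP => S; rewrite inE mem_filter.
apply/andP/idP => [[] // | SR]; split=> //.
by have := subsetP sR S SR; rewrite -sPQ inE.
Qed.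

Lemma standard_restrict : rank_preserving (restrict M F) P -> standard (restrict M F) P.
Proof.
move=> rpP; apply: (standard_of_prefix_cuts (filter_uniq _ us) (filter_colors (subsetUl P Q))).
move=> S; rewrite mem_filter => /andP[SP Ss].
have lt_is : index S s < size s by rewrite index_mem.
have eS := nth_index set0 Ss.
rewrite (prefix_union_filter (D := F)) // => [|X]; last first.
  by rewrite inE; case: (boolP (X \in P)) => [/block_subF | _ /block_disjF].
have dHS : [disjoint pre (index S s) :&: F & S].
  by rewrite -{2}eS; apply: disjointWl (subsetIl _ _) (prefix_union_disjoint lt_is).
apply/(cut_restrictP (restrict_matroid HM F) dHS).
have rF (A : {set T}) : A \subset F -> rank (restrict M F) A = rank M A.
  by move=> sAF; rewrite rank_restrict (setIidPl sAF).
have sSF := block_subF SP.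
rewrite !rF ?subUset ?subsetIr ?sSF //; split=> [|x xS].
- have -> : pre (index S s) :&: F :|: S = pre (index S s).+1 :&: F.
    by rewrite prefix_unionS // eS setIUl (setIidPl sSF).
  by rewrite restrict_prefix_step // eS.
- rewrite rF ?subUset ?sub1set ?subsetIr ?(subsetP sSF) //.
  by apply: prefix_span_setI lt_is _; rewrite eS.
Qed.

Lemma standard_contract : rank_preserving (contract M F) Q -> standard (contract M F) Q.
Proof.
move=> rpQ; apply: (standard_of_prefix_cuts (filter_uniq _ us) (filter_colors (subsetUr P Q))).
move=> S; rewrite mem_filter => /andP[SQ Ss].
have lt_is : index S s < size s by rewrite index_mem.
have eS := nth_index set0 Ss.
rewrite (prefix_union_filter (D := ~: F)) // -?setDE => [|X XPQ]; last first.
  case: ifP => [/block_disjF | XQ]; first by rewrite -disjoints_subset.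
  by rewrite disjoints_subset setCK; apply: block_subF; move: XPQ; rewrite inE XQ orbF.
set H := pre (index S s).
have dHS : [disjoint H :\: F & S].
  by rewrite -eS; apply: disjointWl (subsetDl _ _) (prefix_union_disjoint lt_is).
apply/(cut_restrictP (contract_matroid F HM) dHS).
have sHE : H :\: F \subset ground M :\: F by apply/setSD/prefix_union_sub.
have sSE : S \subset ground M :\: F := partitionS cQ SQ.
have step : rank M (pre (index S s).+1 :|: F) = (rank M (H :|: F)).+1.
  by rewrite contract_prefix_step // eS.
have rF_le := rank_mono HM (subsetUr H F).
rewrite !rank_contract ?subUset ?sHE ?sSE // setDKU; split=> [|x xS].
- by rewrite setUAC setDKU -setUAC -{1}eS -prefix_unionS // step; lia.
- rewrite rank_contract ?subUset ?sub1set ?(subsetP sSE) // -setUA setDKU.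
  have := prefix_step_setU F lt_is (_ : x \in nth set0 s (index S s)); rewrite eS step.
  by rewrite -/H => /(_ xS); lia.
Qed.

End StandardUnion.

Theorem lemma15 (T : finType) (M : setsys T) (F : {set T}) :
  is_matroid M -> loopless M -> is_flat M F ->
  has_nonstd_rp_rcf_coloring (restrict M F) \/
  has_nonstd_rp_rcf_coloring (contract M F) ->
  has_nonstd_rp_rcf_coloring M.
Proof.
move=> HM lM flatF; have [sF _] := flatF.
have [P0 colP0] := rp_rcf_coloring_exists (restrict_matroid HM F) (loopless_restrict lM sF).
have [Q0 colQ0] := rp_rcf_coloring_exists (contract_matroid F HM) (loopless_contract HM flatF).
case=> [[P [cP rcfP rpP nsP]] | [Q [cQ rcfQ rpQ nsQ]]].
- have [cPQ rcfPQ rpPQ] := rp_rcf_coloring_setU HM sF (And3 cP rcfP rpP) colQ0.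
  have [cQ0 _ _] := colQ0.
  exists (P :|: Q0); split=> // [[s [us sPQ cuts]]]; apply: nsP.
  exact: (standard_restrict HM sF cP cQ0 us sPQ cuts rpP).
- have [cPQ rcfPQ rpPQ] := rp_rcf_coloring_setU HM sF colP0 (And3 cQ rcfQ rpQ).
  have [cP0 _ _] := colP0.
  exists (P0 :|: Q); split=> // [[s [us sPQ cuts]]]; apply: nsQ.
  exact: (standard_contract HM sF cP0 cQ us sPQ cuts rpQ).
Qed.
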